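(* Let $(u,v)$ be the solution of (1.1) with initial data satisfying $(H_\infty)$, and for $\epsilon>0$ let $w^\epsilon(t,x)=-\epsilon\log u(t/\epsilon,x/\epsilon)$ on $[0,\infty)\times\mathbb{R}$. Then for each compact set $Q\subset\big((0,\infty)\times\mathbb{R}\big)\cup\big(\{0\}\times(-\infty,0)\big)$ there is a constant $C(Q)>0$, independent of $\epsilon$, such that $0\le w^\epsilon(t,x)\le C(Q)$ for all $(t,x)\in Q$ and all $\epsilon\in(0,1/C(Q)]$.
   Context: System (1.1): $\partial_t u-\partial_{xx}u=u(1-u-av)$, $\partial_t v-d\,\partial_{xx}v=rv(1-bu-v)$ for $(t,x)\in(0,\infty)\times\mathbb{R}$, with $u(0,x)=u_0(x)$, $v(0,x)=v_0(x)$, where $d,r>0$ and $a,b\in(0,1)$ are constants. Hypothesis $(H_\infty)$: $u_0,v_0\in C(\mathbb{R};[0,1])$; there exist constants $\theta_0>0$, $x_0>0$ such that $\theta_0\le u_0(x)\le1$ for $x\le 0$ and $u_0(x)=0$ for $x\ge x_0$; $v_0$ is not identically zero and has compact support. (Here $-\log 0=+\infty$.) *)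

From Stdlib Require Import Reals Lra.
Open Scope R_scope.

Definition cont2_at_in (D : R -> R -> Prop) (f : R -> R -> R) (t x : R) : Prop :=
  forall eps, 0 < eps -> exists delta, 0 < delta /\
    forall s y, D s y -> Rabs (s - t) < delta -> Rabs (y - x) < delta ->
      Rabs (f s y - f t x) < eps.

Definition closed_half (s y : R) : Prop := 0 <= s.
Definition open_half (s y : R) : Prop := 0 < s.

Definition C12 (w wt wx wxx : R -> R -> R) : Prop :=
  (forall t x, 0 <= t -> cont2_at_in closed_half w t x) /\
  (forall t x, 0 < t ->
     derivable_pt_lim (fun s => w s x) t (wt t x) /\
     derivable_pt_lim (fun y => w t y) x (wx t x) /\
     derivable_pt_lim (fun y => wx t y) x (wxx t x)) /\
  (forall t x, 0 < t -> cont2_at_in open_half wt t x /\ cont2_at_in open_half wxx t x).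

Definition is_solution_11 (d r a b : R) (u0 v0 : R -> R) (u v : R -> R -> R) : Prop :=
  exists ut ux uxx vt vx vxx : R -> R -> R,
    C12 u ut ux uxx /\ C12 v vt vx vxx /\
    (forall t x, 0 < t -> ut t x - uxx t x = u t x * (1 - u t x - a * v t x)) /\
    (forall t x, 0 < t -> vt t x - d * vxx t x = r * v t x * (1 - b * u t x - v t x)) /\
    (forall x, u 0 x = u0 x) /\ (forall x, v 0 x = v0 x) /\
    (exists M, forall t x, 0 <= t -> Rabs (u t x) <= M /\ Rabs (v t x) <= M).

Definition H_infty (u0 v0 : R -> R) : Prop :=
  continuity u0 /\ continuity v0 /\
  (forall x, 0 <= u0 x <= 1) /\ (forall x, 0 <= v0 x <= 1) /\
  (exists theta0 x0, 0 < theta0 /\ 0 < x0 /\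
     (forall x, x <= 0 -> theta0 <= u0 x <= 1) /\
     (forall x, x0 <= x -> u0 x = 0)) /\
  (exists x, v0 x <> 0) /\
  (exists K, forall x, K < Rabs x -> v0 x = 0).

(* Topology of R^2 (max-norm balls, which induce the Euclidean topology). *)
Definition open2 (U : R * R -> Prop) : Prop :=
  forall p, U p -> exists e, 0 < e /\
    forall q, Rabs (fst q - fst p) < e -> Rabs (snd q - snd p) < e -> U q.

Definition compact2 (Q : R * R -> Prop) : Prop :=
  forall (I : Type) (U : I -> R * R -> Prop),
    (forall i, open2 (U i)) ->
    (forall p, Q p -> exists i, U i p) ->
    exists l : list I, forall p, Q p -> exists i, List.In i l /\ U i p.

From Stdlib Require Import Reals Lra ClassicalEpsilon List.
From Coquelicot Require Import Coquelicot.
Open Scope R_scope.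

(* The proof is a comparison argument followed by a compactness argument.
   1. A weak minimum principle on [0,oo) x R for functions bounded below
      which are supersolutions of w_t - D w_xx >= K w wherever w < 0
      ([min_principle]); it is proved by minimising the penalised function
      e^{-lam t} w + del (x^2 + (2D+1) t) over a rectangle and reading off the
      signs of its first time and second space derivatives at the minimum.
   2. Applied to v, u and 1 - u it yields 0 <= u <= 1 and v >= 0.
   3. The truncated travelling cosine
        z(s,y) = A e^{-mu s} e^{-c xi/2} cos^+(kap xi),  xi = y - c s + PI/(2 kap),
      is a subsolution of u_t - u_xx >= -M u for mu = M + kap^2 + c^2/4 and
      lies below u_0 at s = 0, so u >= z ([solution_above_bump]).
   4. Choosing the width eps k and rescaling gives, on the inner half of the
      strip |x - c t + PI/(2k)| <= PI/(4k), the bound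
      -eps log u(t/eps, x/eps) <= -log(th/2) + |c| PI/(2k) + (M + k^2 + c^2/4) t.
   5. Every point of Q is the centre of such a strip (for suitable c, k); finitely
      many of these open strips cover the compact set Q. *)

Lemma exp_monotone x y : x <= y -> exp x <= exp y.
Proof. intros [H| ->]; [left; apply exp_increasing; auto | right; reflexivity]. Qed.

Lemma deriv_nonpos_at_left_min (f : R -> R) t l rho :
  derivable_pt_lim f t l -> 0 < rho ->
  (forall s, t - rho < s <= t -> f t <= f s) -> l <= 0.
Proof.
  intros Hd Hr Hm. destruct (Rle_or_lt l 0) as [|Hl]; [auto|exfalso].
  destruct (Hd (l/2) ltac:(lra)) as [d Hd'].
  assert (Hd0 := cond_pos d).
  set (h := - Rmin (d/2) (rho/2)).
  assert (Hmin_d := Rmin_l (d/2) (rho/2)). assert (Hmin_r := Rmin_r (d/2) (rho/2)).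
  assert (Hmin_pos : 0 < Rmin (d/2) (rho/2)) by (apply Rmin_pos; lra).
  assert (Hh : Rabs h < d) by (unfold h; rewrite Rabs_left; lra).
  specialize (Hd' h ltac:(unfold h; lra) Hh).
  assert (Hs : f t <= f (t + h)) by (apply Hm; unfold h; lra).
  assert (Hq : 0 <= (f (t + h) - f t) / h * (-1)).
  { replace ((f (t + h) - f t) / h * -1) with ((f (t + h) - f t) / (-h))
      by (field; unfold h; lra).
    apply Rdiv_le_0_compat; [lra | unfold h; lra]. }
  revert Hd' Hq. unfold Rabs; destruct Rcase_abs; intros; lra.
Qed.

Lemma deriv_nonneg_at_right_min (f : R -> R) t l rho :
  derivable_pt_lim f t l -> 0 < rho ->
  (forall s, t <= s < t + rho -> f t <= f s) -> 0 <= l.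
Proof.
  intros Hd Hr Hm.
  assert (Hd2 : derivable_pt_lim (fun s => f (- s)) (- t) (- l)).
  { replace (- l) with (l * (-1)) by ring.
    apply (derivable_pt_lim_comp (fun s => - s) f (-t) (-1) l).
    - replace (-1) with (- (1)) by ring. apply derivable_pt_lim_opp, derivable_pt_lim_id.
    - rewrite Ropp_involutive; exact Hd. }
  enough (- l <= 0) by lra.
  apply (deriv_nonpos_at_left_min _ _ _ rho Hd2 Hr).
  intros s Hs. rewrite Ropp_involutive. apply Hm; lra.
Qed.

(* At an interior minimum of a twice differentiable function, [f'' >= 0]:
   [f' = 0] there, and if [f''] were negative, [f'] would be negative just to
   the right, so [f] would decrease there by the mean value theorem. *)
Lemma second_deriv_nonneg_at_min (f f' : R -> R) x l rho :
  0 < rho ->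
  (forall y, Rabs (y - x) < rho -> derivable_pt_lim f y (f' y)) ->
  derivable_pt_lim f' x l ->
  (forall y, Rabs (y - x) < rho -> f x <= f y) -> 0 <= l.
Proof.
  intros Hr Hf Hf' Hm.
  assert (Hfx : derivable_pt_lim f x (f' x)) by (apply Hf; rewrite Rminus_diag, Rabs_R0; lra).
  assert (Hcrit : f' x = 0).
  { assert (f' x <= 0).
    { apply (deriv_nonpos_at_left_min f x _ rho Hfx Hr). intros s Hs. apply Hm.
      unfold Rabs; destruct Rcase_abs; lra. }
    assert (0 <= f' x).
    { apply (deriv_nonneg_at_right_min f x _ rho Hfx Hr). intros s Hs. apply Hm.
      unfold Rabs; destruct Rcase_abs; lra. }
    lra. }
  destruct (Rle_or_lt 0 l) as [|Hl]; [auto|exfalso].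
  destruct (Hf' (-l/2) ltac:(lra)) as [d Hd].
  assert (Hd0 := cond_pos d).
  set (h := Rmin (d/2) (rho/2)).
  assert (Hh : 0 < h) by (apply Rmin_pos; lra).
  assert (Hhd : h <= d/2) by apply Rmin_l. assert (Hhr : h <= rho/2) by apply Rmin_r.
  destruct (MVT_cor2 f f' x (x + h)) as [c [Hc1 Hc2]]; [lra| |].
  { intros c Hc. apply Hf. unfold Rabs; destruct Rcase_abs; lra. }
  assert (Hf'c : f' c < 0).
  { specialize (Hd (c - x) ltac:(lra) ltac:(rewrite Rabs_right by lra; lra)).
    replace (x + (c - x)) with c in Hd by ring. rewrite Hcrit in Hd.
    assert (Hq : (f' c - 0) / (c - x) < l / 2)
      by (revert Hd; unfold Rabs; destruct Rcase_abs; intros; lra).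
    destruct (Rle_or_lt 0 (f' c)) as [Hpos|]; [|auto].
    assert (0 <= (f' c - 0) / (c - x)) by (apply Rdiv_le_0_compat; lra).
    lra. }
  assert (f x <= f (x + h)) by (apply Hm; rewrite Rabs_right by lra; lra).
  assert (f' c * (x + h - x) < 0) by (apply Rmult_neg_pos; lra).
  lra.
Qed.

Lemma derivable_pt_lim_local (f g : R -> R) t l rho :
  derivable_pt_lim f t l -> 0 < rho ->
  (forall s, Rabs (s - t) < rho -> f s = g s) -> derivable_pt_lim g t l.
Proof.
  intros Hf Hr Heq. apply is_derive_Reals. apply is_derive_Reals in Hf.
  apply (is_derive_ext_loc f g); [|exact Hf].
  exists (mkposreal rho Hr). intros s Hs. apply Heq. exact Hs.
Qed.

Lemma derivable_pt_lim_const_minus (f : R -> R) t l C :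
  derivable_pt_lim f t l -> derivable_pt_lim (fun s => C - f s) t (- l).
Proof.
  intro H. replace (- l) with (0 - l) by ring.
  apply (derivable_pt_lim_minus (fun _ => C) f); [apply derivable_pt_lim_const | exact H].
Qed.

Lemma Rmax0_lipschitz u t : Rabs (Rmax 0 u - Rmax 0 t) <= Rabs (u - t).
Proof.
  unfold Rmax; destruct (Rle_dec 0 u); destruct (Rle_dec 0 t);
  unfold Rabs; repeat destruct Rcase_abs; lra.
Qed.

(* A function continuous on [0,oo) x R becomes continuous on R^2 once time is
   clamped at 0; this lets us use Coquelicot's two-dimensional continuity. *)
Lemma continuity_2d_clamped (w : R -> R -> R) :
  (forall t x, 0 <= t -> cont2_at_in closed_half w t x) ->
  forall t x, continuity_2d_pt (fun s y => w (Rmax 0 s) y) t x.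
Proof.
  intros Hw t x eps.
  destruct (Hw (Rmax 0 t) x (Rmax_l 0 t) eps (cond_pos eps)) as [d [Hd Hd']].
  exists (mkposreal d Hd); simpl; intros s y Hs Hy.
  apply Hd'; [apply Rmax_l | | exact Hy].
  eapply Rle_lt_trans; [apply Rmax0_lipschitz | exact Hs].
Qed.

Lemma continuity_2d_slice (F : R -> R -> R) t x :
  continuity_2d_pt F t x -> continuity_pt (F t) x.
Proof.
  intros H eps Heps. destruct (H (mkposreal eps Heps)) as [d Hd].
  exists d; split; [apply cond_pos|]. intros y [_ Hy]. simpl in *. unfold R_dist in *.
  apply Hd; [rewrite Rminus_diag, Rabs_R0; apply cond_pos | exact Hy].
Qed.

(* Extreme value theorem on a rectangle: minimise in [x] for each [t], then
   minimise the (uniformly continuous) partial minimum in [t]. *)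
Lemma rectangle_min (F : R -> R -> R) a b c d :
  a <= b -> c <= d -> (forall t x, continuity_2d_pt F t x) ->
  exists t0 x0, a <= t0 <= b /\ c <= x0 <= d /\
    forall t x, a <= t <= b -> c <= x <= d -> F t0 x0 <= F t x.
Proof.
  intros Hab Hcd HF.
  assert (Hslice : forall t, exists x0,
             (forall y, c <= y <= d -> F t x0 <= F t y) /\ c <= x0 <= d).
  { intro t. apply continuity_ab_min; [exact Hcd|].
    intros y _. apply continuity_2d_slice, HF. }
  destruct (choice _ Hslice) as [xm Hxm].
  set (m := fun t => F t (xm t)).
  assert (Hm : forall t0, a <= t0 <= b -> continuity_pt m t0).
  { intros t0 Ht0 eps Heps.
    destruct (uniform_continuity_2d F (a-1) (b+1) c d (fun x y _ _ => HF x y)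
                (mkposreal eps Heps)) as [del Hdel].
    exists (Rmin del 1); split; [apply Rmin_pos; [apply cond_pos|lra]|].
    intros t [_ Ht]. simpl in *. unfold R_dist in *.
    assert (Hmin1 := Rmin_l del 1). assert (Hmin2 := Rmin_r del 1).
    assert (Htt : a - 1 <= t <= b + 1) by (unfold Rabs in Ht; destruct Rcase_abs; lra).
    destruct (Hxm t) as [Ht1 Ht2]. destruct (Hxm t0) as [Ht01 Ht02].
    assert (A1 : Rabs (F t (xm t0) - F t0 (xm t0)) < eps).
    { apply Hdel; try lra. rewrite Rminus_diag, Rabs_R0; apply cond_pos. }
    assert (A2 : Rabs (F t0 (xm t) - F t (xm t)) < eps).
    { apply Hdel; try lra. rewrite Rabs_minus_sym; lra.
      rewrite Rminus_diag, Rabs_R0; apply cond_pos. }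
    assert (B1 := Ht1 (xm t0) Ht02). assert (B2 := Ht01 (xm t) Ht2).
    unfold m. revert A1 A2 B1 B2. unfold Rabs; repeat destruct Rcase_abs; intros; lra. }
  destruct (continuity_ab_min m a b Hab Hm) as [t0 [Ht0' Ht0]].
  exists t0, (xm t0). destruct (Hxm t0) as [_ Hx0]. split; [|split]; auto.
  intros t x Ht Hx. eapply Rle_trans; [apply (Ht0' t Ht)|]. apply (proj1 (Hxm t)); auto.
Qed.

Lemma cont2_at_in_minus (w z : R -> R -> R) :
  (forall t x, 0 <= t -> cont2_at_in closed_half w t x) ->
  (forall t x, continuity_2d_pt z t x) ->
  forall t x, 0 <= t -> cont2_at_in closed_half (fun s y => w s y - z s y) t x.
Proof.
  intros Hw Hz t x Ht eps Heps.
  destruct (Hw t x Ht (eps / 2) ltac:(lra)) as [d1 [Hd1 H1]].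
  destruct (Hz t x (mkposreal (eps / 2) ltac:(lra))) as [d2 H2].
  assert (Hd2 := cond_pos d2).
  exists (Rmin d1 d2); split; [apply Rmin_pos; lra|].
  intros s y Hsy Hs Hy.
  assert (Rmin d1 d2 <= d1) by apply Rmin_l. assert (Rmin d1 d2 <= d2) by apply Rmin_r.
  specialize (H1 s y Hsy ltac:(lra) ltac:(lra)). specialize (H2 s y ltac:(lra) ltac:(lra)).
  simpl in H2. revert H1 H2. unfold Rabs; repeat destruct Rcase_abs; intros; lra.
Qed.

(** * A weak minimum principle for [w_t - D w_xx >= K w] *)

Definition local_supersolution (D K : R) (w : R -> R -> R) (t x : R) : Prop :=
  exists wt wxx (g : R -> R) rho, 0 < rho /\
    derivable_pt_lim (fun s => w s x) t wt /\
    (forall y, Rabs (y - x) < rho -> derivable_pt_lim (fun y => w t y) y (g y)) /\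
    derivable_pt_lim g x wxx /\ K * w t x <= wt - D * wxx.

(* The penalised function [e^{-lam s} w + del (y^2 + (2D+1) s)]: the weight
   [e^{-lam s}] turns [K] into [K - lam < 0], the quadratic term forces the
   minimum into a bounded region and makes it strict in the PDE sense. *)
Definition penalized (lam del D : R) (w : R -> R -> R) (s y : R) : R :=
  exp (- lam * s) * w s y + del * (y * y + (2 * D + 1) * s).

Lemma is_derive_eq_value (f : R -> R) x l l' : is_derive f x l -> l = l' -> is_derive f x l'.
Proof. intros H <-; exact H. Qed.

Lemma penalized_dt lam del D w t x wt :
  derivable_pt_lim (fun s => w s x) t wt ->
  derivable_pt_lim (fun s => penalized lam del D w s x) t
    (exp (- lam * t) * (wt - lam * w t x) + del * (2 * D + 1)).
Proof.
  intro H. apply is_derive_Reals in H. apply is_derive_Reals. unfold penalized.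
  eapply is_derive_eq_value.
  - apply (is_derive_plus (fun s => exp (- lam * s) * w s x)); [|auto_derive; auto].
    apply (is_derive_mult (fun s => exp (- lam * s)) (fun s => w s x));
      [auto_derive; auto | exact H | intros; apply Rmult_comm].
  - unfold plus, mult; simpl. ring.
Qed.

Lemma penalized_dy lam del D w t y wy :
  derivable_pt_lim (fun y => w t y) y wy ->
  derivable_pt_lim (fun y => penalized lam del D w t y) y
    (exp (- lam * t) * wy + del * (2 * y)).
Proof.
  intro H. apply is_derive_Reals in H. apply is_derive_Reals. unfold penalized.
  eapply is_derive_eq_value.
  - apply (is_derive_plus (fun y => exp (- lam * t) * w t y)); [|auto_derive; auto].
    apply (is_derive_scal (fun y => w t y)); exact H.
  - unfold plus, scal; simpl. unfold mult; simpl. ring.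
Qed.

Lemma penalized_dyy lam del t (g : R -> R) x wxx :
  derivable_pt_lim g x wxx ->
  derivable_pt_lim (fun y => exp (- lam * t) * g y + del * (2 * y)) x
    (exp (- lam * t) * wxx + del * 2).
Proof.
  intro H. apply is_derive_Reals in H. apply is_derive_Reals.
  eapply is_derive_eq_value.
  - apply (is_derive_plus (fun y => exp (- lam * t) * g y)); [|auto_derive; auto].
    apply (is_derive_scal g); exact H.
  - unfold plus, scal; simpl. unfold mult; simpl. ring.
Qed.

(* The penalised function of a local supersolution with [K < lam] cannot
   attain a (backward-in-time, two-sided-in-space) local minimum at a point
   where [w < 0]: there [Y_t <= 0 <= Y_xx] would give
   [e^{-lam t} (w_t - D w_xx - lam w) <= - del < 0], while the left side is
   [>= e^{-lam t} (K - lam) w > 0]. *)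
Lemma penalized_no_negative_min lam del D K w t0 x0 rho :
  0 < D -> K < lam -> 0 < del -> 0 < rho -> w t0 x0 < 0 ->
  local_supersolution D K w t0 x0 ->
  (forall s y, t0 - rho < s <= t0 -> Rabs (y - x0) < rho ->
     penalized lam del D w t0 x0 <= penalized lam del D w s y) -> False.
Proof.
  intros HD HK Hdel Hrho Hneg [wt [wxx [g [rho' [Hrho' [Hdt [Hdx [Hdxx Hsup]]]]]]]] Hmin.
  assert (Htime : exp (- lam * t0) * (wt - lam * w t0 x0) + del * (2 * D + 1) <= 0).
  { apply (deriv_nonpos_at_left_min _ t0 _ rho (penalized_dt lam del D w t0 x0 wt Hdt) Hrho).
    intros s Hs. apply Hmin; [lra|]. rewrite Rminus_diag, Rabs_R0; lra. }
  set (rho2 := Rmin rho rho').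
  assert (Hrho2 : 0 < rho2) by (apply Rmin_pos; lra).
  assert (Hr1 : rho2 <= rho) by apply Rmin_l. assert (Hr2 : rho2 <= rho') by apply Rmin_r.
  assert (Hspace : 0 <= exp (- lam * t0) * wxx + del * 2).
  { apply (second_deriv_nonneg_at_min (fun y => penalized lam del D w t0 y)
             (fun y => exp (- lam * t0) * g y + del * (2 * y)) x0 _ rho2 Hrho2).
    - intros y Hy. apply penalized_dy, Hdx. lra.
    - apply penalized_dyy, Hdxx.
    - intros y Hy. apply Hmin; lra. }
  assert (HE := exp_pos (- lam * t0)).
  assert (Hpos : 0 < exp (- lam * t0) * ((K - lam) * w t0 x0))
    by (apply Rmult_lt_0_compat; nra).
  assert (exp (- lam * t0) * ((K - lam) * w t0 x0)
          <= exp (- lam * t0) * (wt - D * wxx - lam * w t0 x0))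
    by (apply Rmult_le_compat_l; lra).
  assert (0 <= D * (exp (- lam * t0) * wxx + del * 2)) by (apply Rmult_le_pos; lra).
  nra.
Qed.

Lemma penalized_continuous lam del D (W : R -> R -> R) :
  (forall s y, continuity_2d_pt W s y) ->
  forall s y, continuity_2d_pt (penalized lam del D W) s y.
Proof.
  intros HWc s y. unfold penalized. apply continuity_2d_pt_plus.
  - apply continuity_2d_pt_mult; [|apply HWc].
    apply (continuity_1d_2d_pt_comp exp (fun s _ => - lam * s)).
    + apply (derivable_continuous _ derivable_exp).
    + apply continuity_2d_pt_mult; [apply continuity_2d_pt_const|apply continuity_2d_pt_id1].
  - apply continuity_2d_pt_mult; [apply continuity_2d_pt_const|].
    apply continuity_2d_pt_plus.
    + apply continuity_2d_pt_mult; apply continuity_2d_pt_id2.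
    + apply continuity_2d_pt_mult; [apply continuity_2d_pt_const|apply continuity_2d_pt_id1].
Qed.

(* Far out in space the quadratic penalty dominates the lower bound [-M]. *)
Lemma penalized_nonneg_far lam del D M w s y :
  0 <= D -> 0 <= lam -> 0 < del -> 0 <= s -> 0 <= M -> - M <= w s y ->
  M / del + 1 <= Rabs y -> 0 <= penalized lam del D w s y.
Proof.
  intros HD Hlam Hdel Hs HM Hw Hy. unfold penalized.
  assert (HE := exp_pos (- lam * s)).
  assert (HE1 : exp (- lam * s) <= 1) by (rewrite <- exp_0; apply exp_monotone; nra).
  assert (Hlow : - M <= exp (- lam * s) * w s y) by nra.
  assert (HMd : del * (M / del) = M) by (field; lra).
  assert (HMd0 : 0 <= M / del) by (apply Rdiv_le_0_compat; lra).
  assert (Hyy : Rabs y * Rabs y = y * y) by (rewrite <- Rabs_mult; apply Rabs_right; nra).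
  assert (M / del + 1 <= y * y) by nra.
  assert (del * (M / del + 1) <= del * (y * y)) by (apply Rmult_le_compat_l; lra).
  assert (0 <= del * ((2 * D + 1) * s)) by (apply Rmult_le_pos; nra).
  nra.
Qed.

(* If the penalised function is negative somewhere at time [T], it attains
   its minimum over [[0,T] x R] at a point with [t0 > 0] and [w < 0]: it is
   [>= 0] at [t = 0] and far out in space. *)
Lemma penalized_negative_min lam del D M w T X :
  0 <= D -> 0 <= lam -> 0 < del -> 0 < T ->
  (forall t x, 0 <= t -> cont2_at_in closed_half w t x) ->
  (forall t x, 0 <= t -> - M <= w t x) ->
  (forall x, 0 <= w 0 x) ->
  penalized lam del D w T X < 0 ->
  exists t0 x0 rho, 0 < t0 /\ 0 < rho /\ w t0 x0 < 0 /\
    forall s y, t0 - rho < s <= t0 -> Rabs (y - x0) < rho ->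
      penalized lam del D w t0 x0 <= penalized lam del D w s y.
Proof.
  intros HD Hlam Hdel HT Hc HM H0 HYT.
  (* clamp time at 0 to obtain a function continuous on the whole plane *)
  set (W := fun s y => w (Rmax 0 s) y).
  assert (HYW : forall s y, 0 <= s -> penalized lam del D W s y = penalized lam del D w s y).
  { intros s y Hs. unfold penalized, W. rewrite Rmax_right; auto. }
  assert (HMp : 0 <= M).
  { assert (HMT := HM T X ltac:(lra)). unfold penalized in HYT.
    assert (HE := exp_pos (- lam * T)).
    destruct (Rle_or_lt 0 (w T X)); [|lra].
    assert (0 <= del * (X * X + (2 * D + 1) * T)) by (apply Rmult_le_pos; nra). nra. }
  set (Rr := M / del + Rabs X + 1).
  assert (HMd0 : 0 <= M / del) by (apply Rdiv_le_0_compat; lra).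
  assert (HX0 := Rabs_pos X).
  destruct (rectangle_min (penalized lam del D W) 0 T (- Rr) Rr ltac:(lra) ltac:(unfold Rr; lra)
              (penalized_continuous lam del D W (continuity_2d_clamped w Hc)))
    as [t0 [x0 [Ht0 [Hx0 Hmin]]]].
  assert (HXr : - Rr <= X <= Rr) by (unfold Rr; unfold Rabs in *; destruct Rcase_abs; lra).
  assert (HY0 : penalized lam del D w t0 x0 < 0).
  { rewrite <- HYW by lra. specialize (Hmin T X ltac:(lra) HXr).
    rewrite (HYW T X) in Hmin by lra. lra. }
  assert (Ht0p : 0 < t0).
  { destruct Ht0 as [[|<-] _]; [auto|]. unfold penalized in HY0.
    rewrite Rmult_0_r, exp_0, Rmult_1_l in HY0. specialize (H0 x0). nra. }
  assert (Hwneg : w t0 x0 < 0).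
  { unfold penalized in HY0. assert (HE := exp_pos (- lam * t0)).
    destruct (Rle_or_lt 0 (w t0 x0)); [|auto].
    assert (0 <= del * (x0 * x0 + (2 * D + 1) * t0)) by (apply Rmult_le_pos; nra). nra. }
  assert (Hx0in : Rabs x0 < Rr).
  { destruct (Rle_or_lt Rr (Rabs x0)) as [Hb|]; [exfalso|auto].
    assert (0 <= penalized lam del D w t0 x0); [|lra].
    apply (penalized_nonneg_far lam del D M); try lra; [apply HM; lra | unfold Rr in Hb; lra]. }
  exists t0, x0, (Rmin t0 (Rr - Rabs x0)).
  assert (Hm1 := Rmin_l t0 (Rr - Rabs x0)). assert (Hm2 := Rmin_r t0 (Rr - Rabs x0)).
  split; [lra|]. split; [apply Rmin_pos; lra|]. split; [exact Hwneg|].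
  intros s y Hs Hy. rewrite <- !HYW by lra. apply Hmin; [lra|].
  revert Hy Hx0in Hm2. unfold Rabs; repeat destruct Rcase_abs; intros; lra.
Qed.

Lemma min_principle (w : R -> R -> R) (D K M : R) :
  0 < D ->
  (forall t x, 0 <= t -> cont2_at_in closed_half w t x) ->
  (forall t x, 0 <= t -> - M <= w t x) ->
  (forall x, 0 <= w 0 x) ->
  (forall t x, 0 < t -> w t x < 0 -> local_supersolution D K w t x) ->
  forall t x, 0 <= t -> 0 <= w t x.
Proof.
  intros HD Hc HM H0 Hsup T X HT.
  destruct (Rle_or_lt 0 (w T X)) as [|HwT]; [auto|exfalso].
  assert (HT0 : 0 < T) by (destruct HT as [|<-]; [auto| specialize (H0 X); lra]).
  set (lam := Rabs K + 1).
  assert (HKl : K < lam) by (unfold lam; assert (K <= Rabs K) by apply RRle_abs; lra).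
  assert (Hlam : 0 <= lam) by (unfold lam; assert (0 <= Rabs K) by apply Rabs_pos; lra).
  (* a penalty weight small enough to keep the penalised value at (T,X) negative *)
  set (q := - exp (- lam * T) * w T X).
  assert (Hq : 0 < q) by (unfold q; assert (0 < exp (- lam * T)) by apply exp_pos; nra).
  set (S := X * X + (2 * D + 1) * T + 1).
  assert (HS : 0 < S) by (unfold S; nra).
  set (del := q / (2 * S)).
  assert (Hdel : 0 < del) by (unfold del; apply Rdiv_lt_0_compat; lra).
  assert (HYT : penalized lam del D w T X < 0).
  { unfold penalized.
    assert (del * (X * X + (2 * D + 1) * T) < q).
    { unfold del. apply (Rmult_lt_reg_r (2 * S)); [lra|].
      replace (q / (2 * S) * (X * X + (2 * D + 1) * T) * (2 * S))
        with (q * (X * X + (2 * D + 1) * T)) by (field; lra).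
      assert (0 <= X * X + (2 * D + 1) * T) by nra. unfold S; nra. }
    unfold q in *. lra. }
  destruct (penalized_negative_min lam del D M w T X ltac:(lra) Hlam Hdel HT0 Hc HM H0 HYT)
    as [t0 [x0 [rho [Ht0 [Hrho [Hneg Hmin]]]]]].
  exact (penalized_no_negative_min lam del D K w t0 x0 rho HD HKl Hdel Hrho Hneg
           (Hsup t0 x0 Ht0 Hneg) Hmin).
Qed.

Lemma local_supersolution_of_derivatives D K (w wt wx wxx : R -> R -> R) t x :
  derivable_pt_lim (fun s => w s x) t (wt t x) ->
  (forall y, derivable_pt_lim (fun y => w t y) y (wx t y)) ->
  derivable_pt_lim (fun y => wx t y) x (wxx t x) ->
  K * w t x <= wt t x - D * wxx t x -> local_supersolution D K w t x.
Proof.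
  intros Ht Hx Hxx Hsup. exists (wt t x), (wxx t x), (wx t), 1.
  repeat split; auto; lra.
Qed.

(* [abs_capped th = min (|th|, PI)] and [cos_bump th = max (cos (abs_capped th), 0)],
   written with absolute values so that continuity is inherited from [Rabs].
   [cos_bump] is a continuous function equal to [cos] on [(-PI/2, PI/2)] and
   to [0] outside. *)
Definition abs_capped (th : R) : R := (PI + Rabs th - Rabs (PI - Rabs th)) / 2.
Definition cos_bump (th : R) : R := (cos (abs_capped th) + Rabs (cos (abs_capped th))) / 2.

Lemma cos_bump_continuous th : continuity_pt cos_bump th.
Proof.
  assert (Hcos : continuity cos) by apply (derivable_continuous _ derivable_cos).
  assert (Habs := Rcontinuity_abs).
  assert (Hcst : forall c x, continuity_pt (fun _ : R => c) x)
    by (intros c x; apply continuity_pt_const; intros ? ?; reflexivity).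
  assert (Hcap : continuity (fun th => cos (abs_capped th))).
  { apply (continuity_comp abs_capped cos); [|exact Hcos].
    intro x. unfold abs_capped, Rdiv. apply continuity_pt_mult; [|apply Hcst].
    apply continuity_pt_minus; [apply continuity_pt_plus; [apply Hcst|apply Habs]|].
    apply (continuity_pt_comp (fun th => PI - Rabs th) Rabs); [|apply Habs].
    apply continuity_pt_minus; [apply Hcst|apply Habs]. }
  unfold cos_bump, Rdiv. apply continuity_pt_mult; [|apply Hcst].
  apply continuity_pt_plus; [apply Hcap|].
  apply (continuity_pt_comp _ Rabs); [apply Hcap|apply Habs].
Qed.

Lemma cos_abs th : cos (Rabs th) = cos th.
Proof. unfold Rabs; destruct Rcase_abs; [apply cos_neg|reflexivity]. Qed.

Lemma cos_abs_capped th : Rabs th <= PI -> cos (abs_capped th) = cos th.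
Proof.
  intro H. unfold abs_capped. rewrite (Rabs_right (PI - Rabs th)) by lra.
  replace ((PI + Rabs th - (PI - Rabs th)) / 2) with (Rabs th) by field.
  apply cos_abs.
Qed.

Lemma cos_bump_bounds th : 0 <= cos_bump th <= 1.
Proof.
  unfold cos_bump. destruct (COS_bound (abs_capped th)). unfold Rabs; destruct Rcase_abs; lra.
Qed.

Lemma cos_bump_eq_cos th : Rabs th < PI / 2 -> cos_bump th = cos th.
Proof.
  intro H. assert (Hpi := PI_RGT_0).
  unfold cos_bump. rewrite cos_abs_capped by lra.
  assert (0 < cos th) by (apply cos_gt_0; revert H; unfold Rabs; destruct Rcase_abs; lra).
  rewrite Rabs_right by lra. field.
Qed.

Lemma cos_bump_support th : 0 < cos_bump th -> Rabs th < PI / 2.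
Proof.
  intro H. assert (Hpi := PI_RGT_0).
  destruct (Rlt_or_le (Rabs th) (PI / 2)) as [|H2]; [auto|exfalso].
  assert (cos (abs_capped th) <= 0).
  { destruct (Rle_or_lt (Rabs th) PI).
    - rewrite cos_abs_capped, <- cos_abs by auto. apply cos_le_0; lra.
    - unfold abs_capped. rewrite (Rabs_left (PI - Rabs th)) by lra.
      replace ((PI + Rabs th - - (PI - Rabs th)) / 2) with PI by field.
      rewrite cos_PI; lra. }
  unfold cos_bump in H. rewrite Rabs_left1 in H by lra. lra.
Qed.

Lemma cos_bump_ge_half th : Rabs th <= PI / 4 -> 1 / 2 <= cos_bump th.
Proof.
  intro H. assert (Hpi := PI_RGT_0).
  rewrite cos_bump_eq_cos, <- cos_abs by lra.
  assert (Hc : cos (PI / 4) <= cos (Rabs th)) by (apply cos_decr_1; try lra; apply Rabs_pos).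
  rewrite cos_PI4 in Hc.
  assert (Hs := Rlt_sqrt2_0). assert (Hs2 := sqrt_sqrt 2 ltac:(lra)).
  assert (1 / 2 < 1 / sqrt 2).
  { unfold Rdiv; rewrite !Rmult_1_l. apply Rinv_lt_contravar; nra. }
  lra.
Qed.

(** * A travelling cosine subsolution *)

(* Coordinate moving with speed [c], shifted so that the bump [cos (kap xi)]
   is centred where [xi = 0], i.e. on the line [y = c s - PI/(2 kap)]. *)
Definition front_coord (c kap s y : R) : R := y - c * s + PI / (2 * kap).

(* [A e^{-mu s} e^{-c xi/2} cos (kap xi)] solves
   [f_t - f_yy = (kap^2 + c^2/4 - mu) f] exactly. *)
Definition cos_profile (A mu c kap s y : R) : R :=
  A * exp (- mu * s) * exp (- c * front_coord c kap s y / 2) * cos (kap * front_coord c kap s y).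

Definition cos_profile_y (A mu c kap s y : R) : R :=
  A * exp (- mu * s) * exp (- c * front_coord c kap s y / 2) *
    (- (c / 2) * cos (kap * front_coord c kap s y) - kap * sin (kap * front_coord c kap s y)).

Definition bump_profile (A mu c kap s y : R) : R :=
  A * exp (- mu * s) * exp (- c * front_coord c kap s y / 2) * cos_bump (kap * front_coord c kap s y).

Lemma cos_profile_dt A mu c kap s y :
  derivable_pt_lim (fun s => cos_profile A mu c kap s y) s
    (A * exp (- mu * s) * exp (- c * front_coord c kap s y / 2) *
      ((- mu + c ^ 2 / 2) * cos (kap * front_coord c kap s y)
       + kap * c * sin (kap * front_coord c kap s y))).
Proof.
  apply is_derive_Reals. unfold cos_profile, front_coord, Rminus, Rdiv. auto_derive; auto. ring.
Qed.

Lemma cos_profile_dy A mu c kap s y :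
  derivable_pt_lim (fun y => cos_profile A mu c kap s y) y (cos_profile_y A mu c kap s y).
Proof.
  apply is_derive_Reals. unfold cos_profile, cos_profile_y, front_coord, Rminus, Rdiv.
  auto_derive; auto. ring.
Qed.

Lemma cos_profile_dyy A mu c kap s y :
  derivable_pt_lim (fun y => cos_profile_y A mu c kap s y) y
    (A * exp (- mu * s) * exp (- c * front_coord c kap s y / 2) *
      ((c ^ 2 / 4 - kap ^ 2) * cos (kap * front_coord c kap s y)
       + c * kap * sin (kap * front_coord c kap s y))).
Proof.
  apply is_derive_Reals. unfold cos_profile_y, front_coord, Rminus, Rdiv.
  auto_derive; auto. field.
Qed.

Lemma bump_profile_continuous A mu c kap s y :
  continuity_2d_pt (bump_profile A mu c kap) s y.
Proof.
  assert (He : continuity exp) by apply (derivable_continuous _ derivable_exp).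
  assert (Hxi : continuity_2d_pt (fun s y => front_coord c kap s y) s y).
  { unfold front_coord. apply continuity_2d_pt_plus; [apply continuity_2d_pt_minus|apply continuity_2d_pt_const].
    - apply continuity_2d_pt_id2.
    - apply continuity_2d_pt_mult; [apply continuity_2d_pt_const|apply continuity_2d_pt_id1]. }
  unfold bump_profile.
  apply continuity_2d_pt_mult; [apply continuity_2d_pt_mult; [apply continuity_2d_pt_mult|]|].
  - apply continuity_2d_pt_const.
  - apply (continuity_1d_2d_pt_comp exp (fun s _ => - mu * s)); [apply He|].
    apply continuity_2d_pt_mult; [apply continuity_2d_pt_const|apply continuity_2d_pt_id1].
  - apply (continuity_1d_2d_pt_comp exp (fun s y => - c * front_coord c kap s y / 2)); [apply He|].
    unfold Rdiv. apply continuity_2d_pt_mult; [|apply continuity_2d_pt_const].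
    apply continuity_2d_pt_mult; [apply continuity_2d_pt_const|exact Hxi].
  - apply (continuity_1d_2d_pt_comp cos_bump (fun s y => kap * front_coord c kap s y));
      [apply cos_bump_continuous|].
    apply continuity_2d_pt_mult; [apply continuity_2d_pt_const|exact Hxi].
Qed.

Lemma bump_profile_nonneg A mu c kap s y : 0 <= A -> 0 <= bump_profile A mu c kap s y.
Proof.
  intro HA. unfold bump_profile. destruct (cos_bump_bounds (kap * front_coord c kap s y)).
  assert (H1 := exp_pos (- mu * s)). assert (H2 := exp_pos (- c * front_coord c kap s y / 2)).
  apply Rmult_le_pos; [apply Rmult_le_pos; [apply Rmult_le_pos|]|]; lra.
Qed.

Lemma bump_profile_support A mu c kap s y :
  0 < bump_profile A mu c kap s y -> Rabs (kap * front_coord c kap s y) < PI / 2.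
Proof.
  intro H. apply cos_bump_support. unfold bump_profile in H.
  destruct (cos_bump_bounds (kap * front_coord c kap s y)) as [[Hh|Hh] _]; [auto|].
  rewrite <- Hh, Rmult_0_r in H. lra.
Qed.

(* Near a point where the bump is positive it coincides with the smooth
   profile: the phase [kap xi] is Lipschitz in [(s,y)] with constant
   [kap (|c| + 1)]. *)
Lemma bump_profile_eq_near A mu c kap t x :
  0 < kap -> 0 < bump_profile A mu c kap t x ->
  exists rho, 0 < rho /\ forall s y, Rabs (s - t) < rho -> Rabs (y - x) < rho ->
    bump_profile A mu c kap s y = cos_profile A mu c kap s y.
Proof.
  intros Hk Hz. assert (Hreg := bump_profile_support _ _ _ _ _ _ Hz).
  set (m := PI / 2 - Rabs (kap * front_coord c kap t x)).
  assert (Hc := Rabs_pos c).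
  exists (m / (kap * (Rabs c + 1))).
  split; [apply Rdiv_lt_0_compat; [unfold m; lra|nra]|].
  intros s y Hs Hy. unfold bump_profile, cos_profile. rewrite cos_bump_eq_cos; [reflexivity|].
  replace (kap * front_coord c kap s y)
    with (kap * front_coord c kap t x + (kap * (y - x) - kap * c * (s - t)))
    by (unfold front_coord; field; lra).
  eapply Rle_lt_trans; [apply Rabs_triang|].
  enough (Rabs (kap * (y - x) - kap * c * (s - t)) < m) by (unfold m in *; lra).
  unfold Rminus at 1. eapply Rle_lt_trans; [apply Rabs_triang|].
  rewrite Rabs_Ropp, !Rabs_mult, (Rabs_right kap) by lra.
  assert (Hrho : m / (kap * (Rabs c + 1)) * (kap * (Rabs c + 1)) = m) by (field; nra).
  set (rho := m / (kap * (Rabs c + 1))) in *.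
  assert (kap * Rabs (y - x) < kap * rho) by (apply Rmult_lt_compat_l; lra).
  assert (kap * Rabs c * Rabs (s - t) <= kap * Rabs c * rho)
    by (apply Rmult_le_compat_l; [nra|lra]).
  nra.
Qed.

Lemma half_product_bound c X B :
  Rabs X <= B -> - (Rabs c * B / 2) <= - c * X / 2 <= Rabs c * B / 2.
Proof.
  intro H.
  assert (Rabs (c * X) <= Rabs c * B)
    by (rewrite Rabs_mult; apply Rmult_le_compat_l; [apply Rabs_pos|auto]).
  assert (Hl := RRle_abs (c * X)). assert (Hr := RRle_abs (- (c * X))).
  rewrite Rabs_Ropp in Hr. lra.
Qed.

(* The amplitude for which the bump stays below [th]: on its support
   [|xi| < PI/(2 kap)], so [e^{-c xi/2} <= e^{|c| PI/(4 kap)}]. *)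
Definition bump_height (th c kap : R) : R := th * exp (- (Rabs c * PI / (4 * kap))).

Lemma bump_profile_le th mu c kap s y :
  0 < kap -> 0 < th -> 0 <= mu -> 0 <= s ->
  bump_profile (bump_height th c kap) mu c kap s y <= th.
Proof.
  intros Hk Hth Hmu Hs. set (A := bump_height th c kap).
  assert (HA : 0 < A) by (unfold A, bump_height; apply Rmult_lt_0_compat; [auto|apply exp_pos]).
  destruct (Rle_lt_or_eq_dec 0 _ (bump_profile_nonneg A mu c kap s y ltac:(lra))) as [Hz|Hz];
    [|rewrite <- Hz; lra].
  set (X := front_coord c kap s y).
  assert (HX : Rabs X <= PI / (2 * kap)).
  { assert (Hsupp := bump_profile_support _ _ _ _ _ _ Hz). fold X in Hsupp.
    rewrite Rabs_mult, (Rabs_right kap) in Hsupp by lra.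
    apply (Rmult_le_reg_l kap); [auto|].
    replace (kap * (PI / (2 * kap))) with (PI / 2) by (field; lra). lra. }
  assert (He2 : exp (- c * X / 2) <= exp (Rabs c * PI / (4 * kap))).
  { apply exp_monotone. replace (Rabs c * PI / (4 * kap)) with (Rabs c * (PI / (2 * kap)) / 2)
      by (field; lra).
    apply (half_product_bound c X _ HX). }
  assert (He1 : exp (- mu * s) <= 1) by (rewrite <- exp_0; apply exp_monotone; nra).
  assert (HAth : A * exp (Rabs c * PI / (4 * kap)) = th).
  { unfold A, bump_height. rewrite Rmult_assoc, <- exp_plus, Rplus_opp_l, exp_0. ring. }
  destruct (cos_bump_bounds (kap * X)) as [Hh0 Hh1].
  assert (P1 := exp_pos (- mu * s)). assert (P2 := exp_pos (- c * X / 2)).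
  unfold bump_profile. fold X.
  assert (A * exp (- mu * s) <= A) by nra.
  assert (A * exp (- mu * s) * exp (- c * X / 2) <= A * exp (Rabs c * PI / (4 * kap)))
    by (apply Rmult_le_compat; try lra; apply Rmult_le_pos; lra).
  assert (0 <= A * exp (- mu * s) * exp (- c * X / 2))
    by (apply Rmult_le_pos; [apply Rmult_le_pos|]; lra).
  nra.
Qed.

Lemma bump_profile_ge th mu c kap s y :
  0 < kap -> 0 < th -> Rabs (front_coord c kap s y) <= PI / (4 * kap) ->
  th / 2 * exp (- Rabs c * PI / (2 * kap) - mu * s)
    <= bump_profile (bump_height th c kap) mu c kap s y.
Proof.
  intros Hk Hth Hx.
  assert (Hpi := PI_RGT_0).
  set (X := front_coord c kap s y) in *.
  assert (Hh : 1 / 2 <= cos_bump (kap * X)).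
  { apply cos_bump_ge_half. rewrite Rabs_mult, (Rabs_right kap) by lra.
    replace (PI / 4) with (kap * (PI / (4 * kap))) by (field; lra).
    apply Rmult_le_compat_l; lra. }
  assert (He2 : exp (- (Rabs c * PI / (8 * kap))) <= exp (- c * X / 2)).
  { apply exp_monotone.
    replace (Rabs c * PI / (8 * kap)) with (Rabs c * (PI / (4 * kap)) / 2) by (field; lra).
    apply (half_product_bound c X _ Hx). }
  assert (Hc0 := Rabs_pos c).
  assert (Hexp : exp (- Rabs c * PI / (2 * kap) - mu * s) <=
     exp (- (Rabs c * PI / (4 * kap))) * exp (- mu * s) * exp (- (Rabs c * PI / (8 * kap)))).
  { rewrite <- !exp_plus. apply exp_monotone.
    assert (0 <= Rabs c * PI / (8 * kap)) by (apply Rdiv_le_0_compat; nra).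
    replace (- Rabs c * PI / (2 * kap))
      with (- (Rabs c * PI / (4 * kap)) - Rabs c * PI / (8 * kap) - Rabs c * PI / (8 * kap))
      by (field; lra).
    lra. }
  unfold bump_profile, bump_height. fold X.
  assert (P1 := exp_pos (- (Rabs c * PI / (4 * kap)))). assert (P2 := exp_pos (- mu * s)).
  assert (P3 := exp_pos (- (Rabs c * PI / (8 * kap)))).
  set (E1 := exp (- (Rabs c * PI / (4 * kap)))) in *. set (E2 := exp (- mu * s)) in *.
  set (E3 := exp (- (Rabs c * PI / (8 * kap)))) in *. set (E4 := exp (- c * X / 2)) in *.
  set (h := cos_bump (kap * X)) in *.
  assert (th * E1 * E2 * E3 <= th * E1 * E2 * E4)
    by (apply Rmult_le_compat_l; auto; repeat apply Rmult_le_pos; lra).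
  assert (th * E1 * E2 * E4 * (1 / 2) <= th * E1 * E2 * E4 * h)
    by (apply Rmult_le_compat_l; auto; repeat apply Rmult_le_pos; lra).
  assert (th / 2 * exp (- Rabs c * PI / (2 * kap) - mu * s) <= th / 2 * (E1 * E2 * E3))
    by (apply Rmult_le_compat_l; lra).
  nra.
Qed.

(** * Covering the compact set by strips *)

(* For a point [p = (t,x)] with [t > 0] or ([t = 0], [x < 0]) we choose a width
   [strip_kap p] and a speed [strip_speed p] so that the centre line
   [y = c s - PI/(2 kap)] of the bump passes through [p]. *)
Definition strip_kap (p : R * R) : R :=
  if Rlt_dec 0 (fst p) then 1 else if Rlt_dec (snd p) 0 then - PI / (2 * snd p) else 1.
Definition strip_speed (p : R * R) : R :=
  if Rlt_dec 0 (fst p) then (snd p + PI / 2) / fst p else 0.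

Definition strip_nbhd (p q : R * R) : Prop :=
  Rabs (snd q - strip_speed p * fst q + PI / (2 * strip_kap p)) < PI / (4 * strip_kap p) /\
  Rabs (fst q) < Rabs (fst p) + 1.

Lemma strip_kap_pos p : 0 < strip_kap p.
Proof.
  assert (Hpi := PI_RGT_0). unfold strip_kap. destruct Rlt_dec; [lra|].
  destruct Rlt_dec; [|lra].
  replace (- PI / (2 * snd p)) with (PI / (2 * (- snd p))) by (field; lra).
  apply Rdiv_lt_0_compat; lra.
Qed.

Lemma strip_nbhd_open p : open2 (strip_nbhd p).
Proof.
  intros q [H1 H2]. unfold strip_nbhd. assert (Hk := strip_kap_pos p).
  set (c := strip_speed p) in *. set (k := strip_kap p) in *.
  set (m1 := PI / (4 * k) - Rabs (snd q - c * fst q + PI / (2 * k))).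
  set (m2 := Rabs (fst p) + 1 - Rabs (fst q)).
  assert (Hc := Rabs_pos c).
  set (e := Rmin (m1 / (2 * (Rabs c + 1))) (m2 / 2)).
  assert (He1 : e <= m1 / (2 * (Rabs c + 1))) by apply Rmin_l.
  assert (He2 : e <= m2 / 2) by apply Rmin_r.
  exists e. split.
  { apply Rmin_pos; [apply Rdiv_lt_0_compat; unfold m1; lra | unfold m2; lra]. }
  intros q' Ht Hx. split.
  - replace (snd q' - c * fst q' + PI / (2 * k)) with
      ((snd q - c * fst q + PI / (2 * k)) + ((snd q' - snd q) - c * (fst q' - fst q))) by ring.
    eapply Rle_lt_trans; [apply Rabs_triang|].
    enough (Hlt : Rabs ((snd q' - snd q) - c * (fst q' - fst q)) < m1) by (unfold m1 in Hlt; lra).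
    unfold Rminus at 1. eapply Rle_lt_trans; [apply Rabs_triang|].
    rewrite Rabs_Ropp, Rabs_mult.
    assert (Rabs c * Rabs (fst q' - fst q) <= Rabs c * e) by (apply Rmult_le_compat_l; lra).
    assert (e * (2 * (Rabs c + 1)) <= m1).
    { replace m1 with (m1 / (2 * (Rabs c + 1)) * (2 * (Rabs c + 1))) by (field; lra).
      apply Rmult_le_compat_r; lra. }
    assert (0 < m1) by (unfold m1; lra). nra.
  - replace (fst q') with (fst q + (fst q' - fst q)) by ring.
    eapply Rle_lt_trans; [apply Rabs_triang|]. unfold m2 in *; lra.
Qed.

Lemma strip_nbhd_self p : 0 < fst p \/ (fst p = 0 /\ snd p < 0) -> strip_nbhd p p.
Proof.
  intros H. assert (Hk := strip_kap_pos p). assert (Hpi := PI_RGT_0). split; [|lra].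
  replace (snd p - strip_speed p * fst p + PI / (2 * strip_kap p)) with 0.
  { rewrite Rabs_R0. apply Rdiv_lt_0_compat; lra. }
  unfold strip_speed, strip_kap. destruct (Rlt_dec 0 (fst p)).
  - field. lra.
  - destruct H as [H|[H1 H2]]; [lra|]. destruct (Rlt_dec (snd p) 0); [|lra].
    rewrite H1. field. lra.
Qed.

Fixpoint sum_abs (f : R * R -> R) (l : list (R * R)) : R :=
  match l with nil => 0 | cons i l' => Rabs (f i) + sum_abs f l' end.

Lemma sum_abs_nonneg f l : 0 <= sum_abs f l.
Proof. induction l; simpl; [lra|]. assert (0 <= Rabs (f a)) by apply Rabs_pos. lra. Qed.

Lemma sum_abs_ge f l i : In i l -> f i <= sum_abs f l.
Proof.
  induction l; simpl; [tauto|]. intros [->|H].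
  - assert (f i <= Rabs (f i)) by apply RRle_abs. assert (Hs := sum_abs_nonneg f l). lra.
  - specialize (IHl H). assert (0 <= Rabs (f a)) by apply Rabs_pos. lra.
Qed.

Lemma compact_cover_bound (Q : R * R -> Prop) (U : R * R -> R * R -> Prop) (B : R * R -> R) :
  compact2 Q -> (forall p, open2 (U p)) -> (forall p, Q p -> U p p) ->
  exists C, 1 <= C /\ forall q, Q q -> exists p, U p q /\ B p <= C.
Proof.
  intros HQ Hopen Hself.
  destruct (HQ (R * R)%type U Hopen) as [l Hl]; [intros p Hp; exists p; auto|].
  exists (1 + sum_abs B l). split; [assert (H := sum_abs_nonneg B l); lra|].
  intros q Hq. destruct (Hl q Hq) as [p [Hp HU]]. exists p. split; [exact HU|].
  assert (H := sum_abs_ge B l p Hp). lra.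
Qed.

Definition strip_bound (th M : R) (p : R * R) : R :=
  - ln (th / 2) + Rabs (strip_speed p) * PI / (2 * strip_kap p)
  + (M + strip_kap p ^ 2 + strip_speed p ^ 2 / 4) * (Rabs (fst p) + 1).

(** * Bounds for solutions of the competition system *)

Section CompetitionSolution.

Variables (d r a b M : R) (u v ut ux uxx vt vx vxx : R -> R -> R).
Hypothesis Hd : 0 < d.
Hypothesis Hr : 0 < r.
Hypothesis Ha : 0 < a < 1.
Hypothesis Hb : 0 < b < 1.
Hypothesis Hu_C12 : C12 u ut ux uxx.
Hypothesis Hv_C12 : C12 v vt vx vxx.
Hypothesis Hu_pde : forall t x, 0 < t -> ut t x - uxx t x = u t x * (1 - u t x - a * v t x).
Hypothesis Hv_pde :
  forall t x, 0 < t -> vt t x - d * vxx t x = r * v t x * (1 - b * u t x - v t x).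
Hypothesis Hu_init : forall x, 0 <= u 0 x <= 1.
Hypothesis Hv_init : forall x, 0 <= v 0 x.
Hypothesis Hbound : forall t x, 0 <= t -> Rabs (u t x) <= M /\ Rabs (v t x) <= M.

Lemma solution_bounded t x : 0 <= t -> - M <= u t x <= M /\ - M <= v t x <= M.
Proof.
  intro Ht. destruct (Hbound t x Ht) as [Hu Hv].
  revert Hu Hv. unfold Rabs; repeat destruct Rcase_abs; lra.
Qed.

Lemma C12_local_supersolution D K (w wt wx wxx : R -> R -> R) t x :
  C12 w wt wx wxx -> 0 < t ->
  K * w t x <= wt t x - D * wxx t x -> local_supersolution D K w t x.
Proof.
  intros [_ [Hder _]] Ht Hsup. destruct (Hder t x Ht) as [Hdt [_ Hdxx]].
  apply (local_supersolution_of_derivatives D K w wt wx wxx); auto.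
  intro y. apply (Hder t y Ht).
Qed.

(* [v >= 0]: [v] solves a linear equation [v_t - d v_xx = c(t,x) v] with
   bounded [c]. *)
Lemma solution_v_nonneg t x : 0 <= t -> 0 <= v t x.
Proof.
  apply (min_principle v d (r * (1 + b * M + M)) M Hd (proj1 Hv_C12)).
  - intros s y Hs. apply solution_bounded, Hs.
  - exact Hv_init.
  - intros s y Hs Hneg. apply (C12_local_supersolution _ _ v vt vx vxx); auto.
    rewrite Hv_pde by auto.
    destruct (solution_bounded s y ltac:(lra)) as [Hbu Hbv].
    assert (0 <= b * (u s y + M)) by (apply Rmult_le_pos; lra).
    assert (r * (1 - b * u s y - v s y) <= r * (1 + b * M + M))
      by (apply Rmult_le_compat_l; nra).
    nra.
Qed.

Lemma solution_u_nonneg t x : 0 <= t -> 0 <= u t x.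
Proof.
  apply (min_principle u 1 (1 + 2 * M) M ltac:(lra) (proj1 Hu_C12)).
  - intros s y Hs. apply solution_bounded, Hs.
  - intro y. apply Hu_init.
  - intros s y Hs Hneg. apply (C12_local_supersolution _ _ u ut ux uxx); auto.
    replace (ut s y - 1 * uxx s y) with (ut s y - uxx s y) by ring.
    rewrite Hu_pde by auto.
    destruct (solution_bounded s y ltac:(lra)) as [Hbu Hbv].
    assert (Hv := solution_v_nonneg s y ltac:(lra)).
    assert (1 - u s y - a * v s y <= 1 + 2 * M) by nra.
    nra.
Qed.

(* [u <= 1]: [1 - u] is a supersolution of the heat equation since
   [u (1 - u - a v) <= 0] wherever [u > 1]. *)
Lemma solution_u_le_1 t x : 0 <= t -> u t x <= 1.
Proof.
  intro Ht. destruct Hu_C12 as [Hc [Hder _]].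
  enough (H : 0 <= 1 - u t x) by lra. revert t x Ht.
  apply (min_principle (fun t x => 1 - u t x) 1 0 M ltac:(lra)).
  - intros t x Ht eps Heps. destruct (Hc t x Ht eps Heps) as [dl [Hdl H]].
    exists dl; split; auto. intros s y H1 H2 H3.
    replace (1 - u s y - (1 - u t x)) with (- (u s y - u t x)) by ring.
    rewrite Rabs_Ropp; auto.
  - intros t x Ht. destruct (solution_bounded t x Ht). lra.
  - intro x. destruct (Hu_init x). lra.
  - intros t x Ht Hneg.
    apply (local_supersolution_of_derivatives 1 0 _ (fun t x => - ut t x) (fun t x => - ux t x)
             (fun t x => - uxx t x)).
    + apply derivable_pt_lim_const_minus, Hder, Ht.
    + intro y. apply derivable_pt_lim_const_minus, Hder, Ht.
    + apply (derivable_pt_lim_opp (ux t)), Hder, Ht.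
    + replace (- ut t x - 1 * - uxx t x) with (- (ut t x - uxx t x)) by ring.
      rewrite Hu_pde by auto.
      assert (Hv := solution_v_nonneg t x ltac:(lra)).
      assert (0 <= a * v t x) by nra.
      nra.
Qed.

(* Where the bump is positive, [u - bump] is a local supersolution of
   [w_t - w_xx = -M w]: the smooth profile solves [f_t - f_xx = -M f] for
   [mu = M + kap^2 + c^2/4], while [u_t - u_xx = u (1 - u - a v) >= -M u]. *)
Lemma difference_local_supersolution A c kap t x :
  0 < kap -> 0 < t -> 0 < bump_profile A (M + kap ^ 2 + c ^ 2 / 4) c kap t x ->
  local_supersolution 1 (- M)
    (fun s y => u s y - bump_profile A (M + kap ^ 2 + c ^ 2 / 4) c kap s y) t x.
Proof.
  intros Hk Ht Hz. set (mu := M + kap ^ 2 + c ^ 2 / 4) in *.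
  destruct Hu_C12 as [_ [Hder _]].
  destruct (bump_profile_eq_near _ _ _ _ _ _ Hk Hz) as [rho [Hrho Heq]].
  destruct (Hder t x Ht) as [Hdt [_ Hdxx]].
  set (P := A * exp (- mu * t) * exp (- c * front_coord c kap t x / 2)).
  set (Co := cos (kap * front_coord c kap t x)). set (Si := sin (kap * front_coord c kap t x)).
  exists (ut t x - P * ((- mu + c ^ 2 / 2) * Co + kap * c * Si)),
         (uxx t x - P * ((c ^ 2 / 4 - kap ^ 2) * Co + c * kap * Si)),
         (fun y => ux t y - cos_profile_y A mu c kap t y), rho.
  split; [exact Hrho|]. split; [|split; [|split]].
  - apply (derivable_pt_lim_local (fun s => u s x - cos_profile A mu c kap s x) _ _ _ rho);
      [exact (derivable_pt_lim_minus _ _ _ _ _ Hdt (cos_profile_dt A mu c kap t x)) | exact Hrho|].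
    intros s Hs. rewrite Heq; auto. rewrite Rminus_diag, Rabs_R0; lra.
  - intros y Hy.
    apply (derivable_pt_lim_local (fun y => u t y - cos_profile A mu c kap t y) _ _ _
             (rho - Rabs (y - x))); [|lra|].
    + exact (derivable_pt_lim_minus _ _ _ _ _ (proj1 (proj2 (Hder t y Ht)))
               (cos_profile_dy A mu c kap t y)).
    + intros y' Hy'. rewrite Heq; [reflexivity | rewrite Rminus_diag, Rabs_R0; lra|].
      replace (y' - x) with ((y' - y) + (y - x)) by ring.
      eapply Rle_lt_trans; [apply Rabs_triang|]. lra.
  - exact (derivable_pt_lim_minus _ _ _ _ _ Hdxx (cos_profile_dyy A mu c kap t x)).
  - assert (Hzf : bump_profile A mu c kap t x = P * Co)
      by (rewrite Heq by (rewrite Rminus_diag, Rabs_R0; lra); reflexivity).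
    rewrite Hzf.
    replace (ut t x - P * ((- mu + c ^ 2 / 2) * Co + kap * c * Si) -
             1 * (uxx t x - P * ((c ^ 2 / 4 - kap ^ 2) * Co + c * kap * Si)))
      with ((ut t x - uxx t x) + M * (P * Co)) by (unfold mu; field).
    rewrite Hu_pde by auto.
    destruct (solution_bounded t x ltac:(lra)) as [_ Hbv].
    assert (Hu0 := solution_u_nonneg t x ltac:(lra)).
    assert (Hu1 := solution_u_le_1 t x ltac:(lra)).
    assert (Hv0 := solution_v_nonneg t x ltac:(lra)).
    assert (0 <= a * v t x <= M) by nra.
    assert (0 <= u t x * (1 - u t x - a * v t x + M)) by (apply Rmult_le_pos; lra).
    nra.
Qed.

(* At time 0 the bump is supported in [y < 0], where [u_0 >= th]. *)
Lemma bump_profile_initial_support A mu c kap y :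
  0 < kap -> 0 < bump_profile A mu c kap 0 y -> y < 0.
Proof.
  intros Hk Hz. assert (Hsupp := bump_profile_support _ _ _ _ _ _ Hz).
  unfold front_coord in Hsupp.
  replace (kap * (y - c * 0 + PI / (2 * kap))) with (kap * y + PI / 2) in Hsupp by (field; lra).
  revert Hsupp. unfold Rabs; destruct Rcase_abs; intros; nra.
Qed.

Lemma solution_above_bump th c kap :
  0 < th -> 0 < kap -> (forall x, x <= 0 -> th <= u 0 x) ->
  forall s y, 0 <= s ->
    bump_profile (bump_height th c kap) (M + kap ^ 2 + c ^ 2 / 4) c kap s y <= u s y.
Proof.
  intros Hth Hk Hleft s y Hs.
  set (mu := M + kap ^ 2 + c ^ 2 / 4). set (A := bump_height th c kap).
  assert (HA : 0 < A) by (unfold A, bump_height; apply Rmult_lt_0_compat; [auto|apply exp_pos]).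
  assert (HM : 0 <= M) by (destruct (solution_bounded 0 0 (Rle_refl 0)); lra).
  assert (Hmu : 0 <= mu) by (unfold mu; nra).
  enough (0 <= u s y - bump_profile A mu c kap s y) by lra.
  revert s y Hs.
  apply (min_principle (fun s y => u s y - bump_profile A mu c kap s y) 1 (- M) (M + th) ltac:(lra)).
  - apply (cont2_at_in_minus u (bump_profile A mu c kap) (proj1 Hu_C12)), bump_profile_continuous.
  - intros t x Ht. assert (bump_profile A mu c kap t x <= th) by (apply bump_profile_le; auto).
    assert (Hu := solution_u_nonneg t x Ht). destruct (solution_bounded t x Ht). lra.
  - intro x. destruct (Rle_lt_or_eq_dec 0 _ (bump_profile_nonneg A mu c kap 0 x ltac:(lra)))
      as [Hz|Hz]; [|rewrite <- Hz; destruct (Hu_init x); lra].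
    assert (bump_profile A mu c kap 0 x <= th) by (apply bump_profile_le; lra).
    assert (th <= u 0 x) by (apply Hleft; left; apply (bump_profile_initial_support A mu c kap); auto).
    lra.
  - intros t x Ht Hneg. apply difference_local_supersolution; auto.
    assert (Hu := solution_u_nonneg t x ltac:(lra)). fold mu. lra.
Qed.

(* Hopf-Cole scaling of the comparison: with a bump of width [eps k], the
   rescaled [-eps ln u(t/eps, x/eps)] is bounded on the inner half of the
   strip [|x - c t + PI/(2k)| <= PI/(4k)], uniformly in [eps] in [(0,1]]. *)
Lemma solution_log_bound th c k eps t x :
  0 < th -> 0 < k -> 0 < eps <= 1 -> 0 <= t -> (forall y, y <= 0 -> th <= u 0 y) ->
  Rabs (x - c * t + PI / (2 * k)) <= PI / (4 * k) ->
  0 < u (t / eps) (x / eps) /\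
  0 <= - eps * ln (u (t / eps) (x / eps))
    <= - ln (th / 2) + Rabs c * PI / (2 * k) + (M + k ^ 2 + c ^ 2 / 4) * t.
Proof.
  intros Hth Hk He Ht Hleft Hstrip.
  assert (Hpi := PI_RGT_0). assert (Hkap : 0 < eps * k) by nra.
  assert (Hts : 0 <= t / eps) by (apply Rdiv_le_0_compat; lra).
  assert (Hxi : Rabs (front_coord c (eps * k) (t / eps) (x / eps)) <= PI / (4 * (eps * k))).
  { replace (front_coord c (eps * k) (t / eps) (x / eps)) with (/ eps * (x - c * t + PI / (2 * k)))
      by (unfold front_coord; field; lra).
    rewrite Rabs_mult, (Rabs_right (/ eps)) by (left; apply Rinv_0_lt_compat; lra).
    replace (PI / (4 * (eps * k))) with (/ eps * (PI / (4 * k))) by (field; lra).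
    apply Rmult_le_compat_l; [left; apply Rinv_0_lt_compat; lra | lra]. }
  set (E := - Rabs c * PI / (2 * (eps * k)) - (M + (eps * k) ^ 2 + c ^ 2 / 4) * (t / eps)).
  assert (Hlow : th / 2 * exp E <= u (t / eps) (x / eps)).
  { eapply Rle_trans.
    - apply (bump_profile_ge th (M + (eps * k) ^ 2 + c ^ 2 / 4) c (eps * k) (t / eps) (x / eps));
        auto.
    - apply solution_above_bump; auto. }
  assert (Hlb : 0 < th / 2 * exp E) by (apply Rmult_lt_0_compat; [lra|apply exp_pos]).
  assert (Hu1 := solution_u_le_1 (t / eps) (x / eps) Hts).
  assert (Hth1 : th <= 1) by (assert (H := Hleft 0 (Rle_refl 0)); destruct (Hu_init 0); lra).
  split; [lra|]. split.
  - assert (ln (u (t / eps) (x / eps)) <= 0) by (rewrite <- ln_1; apply ln_le; lra). nra.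
  - assert (Hln : ln (th / 2) + E <= ln (u (t / eps) (x / eps))).
    { rewrite <- (ln_exp E), <- ln_mult by (try apply exp_pos; lra). apply ln_le; auto. }
    assert (HlnE : - eps * E = Rabs c * PI / (2 * k) + (M + (eps * k) ^ 2 + c ^ 2 / 4) * t)
      by (unfold E; field; lra).
    assert (Hth2 : ln (th / 2) <= 0) by (rewrite <- ln_1; apply ln_le; lra).
    assert (Hk2 : (eps * k) ^ 2 <= k ^ 2).
    { replace ((eps * k) ^ 2) with ((eps * eps) * (k * k)) by ring.
      replace (k ^ 2) with (1 * (k * k)) by ring.
      apply Rmult_le_compat_r; nra. }
    assert ((M + (eps * k) ^ 2 + c ^ 2 / 4) * t <= (M + k ^ 2 + c ^ 2 / 4) * t)
      by (apply Rmult_le_compat_r; lra).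
    assert (- eps * ln (u (t / eps) (x / eps)) <= - eps * (ln (th / 2) + E)) by nra.
    assert (- eps * ln (th / 2) <= - ln (th / 2)) by nra.
    lra.
Qed.

Lemma strip_log_bound th p eps t x :
  0 < th -> 0 < eps <= 1 -> 0 <= t -> (forall y, y <= 0 -> th <= u 0 y) ->
  strip_nbhd p (t, x) ->
  0 < u (t / eps) (x / eps) /\ 0 <= - eps * ln (u (t / eps) (x / eps)) <= strip_bound th M p.
Proof.
  intros Hth He Ht Hleft [Hstrip Htime]. simpl in Hstrip, Htime.
  assert (Hk := strip_kap_pos p).
  destruct (solution_log_bound th (strip_speed p) (strip_kap p) eps t x Hth Hk He Ht Hleft
              ltac:(lra)) as [Hpos [Hnn Hle]].
  split; [exact Hpos|]. split; [exact Hnn|].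
  assert (HM : 0 <= M) by (destruct (solution_bounded 0 0 (Rle_refl 0)); lra).
  assert (Htt : t <= Rabs (fst p) + 1) by (assert (H := RRle_abs t); lra).
  assert ((M + strip_kap p ^ 2 + strip_speed p ^ 2 / 4) * t
          <= (M + strip_kap p ^ 2 + strip_speed p ^ 2 / 4) * (Rabs (fst p) + 1))
    by (apply Rmult_le_compat_l; [nra|lra]).
  unfold strip_bound. lra.
Qed.

End CompetitionSolution.

Theorem lemma3p2 (d r a b : R) (u0 v0 : R -> R) (u v : R -> R -> R) :
  0 < d -> 0 < r -> 0 < a < 1 -> 0 < b < 1 ->
  H_infty u0 v0 ->
  is_solution_11 d r a b u0 v0 u v ->
  forall Q : R * R -> Prop,
    compact2 Q ->
    (forall t x, Q (t, x) -> 0 < t \/ (t = 0 /\ x < 0)) ->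
    exists C, 0 < C /\
      forall eps, 0 < eps -> eps <= 1 / C ->
        forall t x, Q (t, x) ->
          0 < u (t / eps) (x / eps) /\
          0 <= - eps * ln (u (t / eps) (x / eps)) <= C.
Proof.
  intros Hd Hr Ha Hb [_ [_ [Hu0 [Hv0 [[th [_ [Hth [_ [Hleft _]]]]] _]]]]]
    [ut [ux [uxx [vt [vx [vxx [Cu [Cv [Pu [Pv [Iu [Iv [M HM]]]]]]]]]]]]] Q HQ HQp.
  assert (Hu_init : forall x, 0 <= u 0 x <= 1) by (intro x; rewrite Iu; apply Hu0).
  assert (Hv_init : forall x, 0 <= v 0 x) by (intro x; rewrite Iv; apply Hv0).
  assert (Hu_left : forall y, y <= 0 -> th <= u 0 y) by (intros y Hy; rewrite Iu; apply Hleft, Hy).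
  (* finitely many strips cover [Q]; take the largest of their bounds *)
  destruct (compact_cover_bound Q strip_nbhd (strip_bound th M) HQ strip_nbhd_open)
    as [C [HC Hcover]].
  { intros [t x] Hp. apply strip_nbhd_self, HQp, Hp. }
  exists C. split; [lra|].
  intros eps He HeC t x Hq.
  assert (He1 : eps <= 1).
  { apply (Rle_trans _ (1 / C)); [exact HeC|].
    unfold Rdiv. rewrite Rmult_1_l, <- Rinv_1. apply Rinv_le_contravar; lra. }
  assert (Ht : 0 <= t) by (destruct (HQp t x Hq) as [|[]]; lra).
  destruct (Hcover _ Hq) as [p [Hp HpC]].
  destruct (strip_log_bound d r a b M u v ut ux uxx vt vx vxx Hd Hr Ha Hb Cu Cv Pu Pv
              Hu_init Hv_init HM th p eps t x Hth ltac:(lra) Ht Hu_left Hp) as [Hpos [Hnn Hle]].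
  repeat split; lra.
Qed.
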